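(* Let $n\ge2$, let $a_1,\dots,a_{n+1}\in\mathbb P^n$ be general points, and let $R\subset\mathbb P^n$ be a hyperplane containing none of them. Let $B=\{\langle a_i,a_j\rangle\cap R : 1\le i<j\le n+1\}$, a set of $\binom{n+1}{2}$ points of $R\cong\mathbb P^{n-1}$. Then $B$ imposes independent conditions on quadrics of $R$; equivalently, no quadric hypersurface of $R$ contains $B$.
   Context: $\langle a_i,a_j\rangle$ denotes the line spanned by $a_i$ and $a_j$. *)

From HB Require Import structures.
From mathcomp Require Import all_boot all_order all_algebra all_field.
Set Implicit Arguments. Unset Strict Implicit. Unset Printing Implicit Defensive.
Import Order.TTheory GRing.Theory Num.Theory.
Local Open Scope ring_scope.

(* Points of P^n are represented by homogeneous coordinate vectors in F^(n+1). *)

(* The standard bilinear pairing; a hyperplane is {x | dotv x c = 0}, c != 0. *)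
Definition dotv (F : fieldType) (m : nat) (x y : 'rV[F]_m) : F :=
  \sum_(k < m) x 0 k * y 0 k.

(* A quadratic form on F^m: every quadratic form is x |-> x A x^T. *)
Definition qform (F : fieldType) (m : nat) (A : 'M[F]_m) (x : 'rV[F]_m) : F :=
  (x *m A *m x^T) 0 0.

(* x lies on the line spanned by a and b (affine cone: linear span). *)
Definition on_line (F : fieldType) (m : nat) (a b x : 'rV[F]_m) : Prop :=
  exists s t : F, x = s *: a + t *: b.

(* Normalise each a_i to b_i with <b_i, c> = 1.  The line through a_i and a_j
   meets the hyperplane in b_i - b_j, so the quadric contains every b_i - b_j.
   A point x of the hyperplane is a combination of the b_i whose coefficients
   sum to 0 (as the a_i form a basis), i.e. a combination of the b_i - b_0.
   Since all b_i - b_j are isotropic, the polar form vanishes on pairs of the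
   b_i - b_0, and the quadratic form vanishes on their whole span. *)

From HB Require Import structures.
From mathcomp Require Import all_boot all_order all_algebra all_field.
From mathcomp Require Import ring.
Set Implicit Arguments. Unset Strict Implicit. Unset Printing Implicit Defensive.
Import Order.TTheory GRing.Theory Num.Theory.
Local Open Scope ring_scope.

Section QuadraticForm.
Variables (F : fieldType) (m : nat) (A : 'M[F]_m).

Definition bform (u v : 'rV[F]_m) : F := (u *m A *m v^T) 0 0.

Lemma qformE u : qform A u = bform u u. Proof. by []. Qed.

Lemma bformDl u v w : bform (u + v) w = bform u w + bform v w.
Proof. by rewrite /bform !mulmxDl mxE. Qed.

Lemma bformDr u v w : bform u (v + w) = bform u v + bform u w.
Proof. by rewrite /bform linearD /= mulmxDr mxE. Qed.

Lemma bformZl s u w : bform (s *: u) w = s * bform u w.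
Proof. by rewrite /bform -!scalemxAl mxE. Qed.

Lemma bformZr s u w : bform u (s *: w) = s * bform u w.
Proof. by rewrite /bform linearZ /= -scalemxAr mxE. Qed.

Lemma qform0 : qform A 0 = 0.
Proof. by rewrite qformE /bform !mul0mx mxE. Qed.

Lemma qformD u v :
  qform A (u + v) = qform A u + qform A v + (bform u v + bform v u).
Proof. by rewrite !qformE bformDl !bformDr; ring. Qed.

Lemma qformZ s u : qform A (s *: u) = s ^+ 2 * qform A u.
Proof. by rewrite !qformE bformZl bformZr mulrA expr2. Qed.

Lemma qformN u : qform A (- u) = qform A u.
Proof. by rewrite -scaleN1r qformZ sqrrN expr1n mul1r. Qed.

Lemma qform_sum_isotropic (I : finType) (w : I -> 'rV[F]_m) (y : I -> F) :
  (forall i, qform A (w i) = 0) ->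
  (forall i j, qform A (w i - w j) = 0) ->
  qform A (\sum_i y i *: w i) = 0.
Proof.
move=> qw qwB.
pose polar u v := bform u v + bform v u.
have polar_w i j : polar (w i) (w j) = 0.
  have := qwB i j; rewrite qformD qformN !qw !add0r.
  rewrite -scaleN1r bformZl bformZr -mulrDr mulN1r => /eqP.
  by rewrite oppr_eq0 => /eqP.
pose K u := qform A u = 0 /\ forall j, polar u (w j) = 0.
have K0 : K 0.
  by split=> [|j]; rewrite ?qform0 // /polar /bform trmx0 !mul0mx mulmx0 !mxE addr0.
suff [] : K (\sum_i y i *: w i) by [].
apply: (big_rec K K0) => i u _ [qu polar_u]; split.
  rewrite qformD qformZ qw qu mulr0 !add0r.
  by have := polar_u i; rewrite /polar bformZl bformZr -mulrDr addrC => ->; rewrite mulr0.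
move=> j; have := polar_w i j; have := polar_u j; rewrite /polar => pu pw.
by rewrite bformDl bformDr bformZl bformZr addrACA -mulrDr pw mulr0 add0r.
Qed.

End QuadraticForm.

Section Hyperplane.
Variables (F : fieldType) (m : nat).
Implicit Types (x y c : 'rV[F]_m).

Lemma dotvE x c : dotv x c = (x *m c^T) 0 0.
Proof. by rewrite /dotv mxE; apply: eq_bigr => k _; rewrite mxE. Qed.

Lemma dotvD x y c : dotv (x + y) c = dotv x c + dotv y c.
Proof. by rewrite !dotvE mulmxDl mxE. Qed.

Lemma dotvZ s x c : dotv (s *: x) c = s * dotv x c.
Proof. by rewrite !dotvE -scalemxAl mxE. Qed.

Lemma dotvB x y c : dotv (x - y) c = dotv x c - dotv y c.
Proof. by rewrite dotvD -scaleN1r dotvZ mulN1r. Qed.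

Lemma dotv_sum (I : finType) (f : I -> 'rV[F]_m) c :
  dotv (\sum_i f i) c = \sum_i dotv (f i) c.
Proof.
elim/big_rec2: _ => [|i u v _ <-]; last by rewrite dotvD.
by rewrite dotvE mul0mx mxE.
Qed.

Lemma row_free_span (a : 'I_m -> 'rV[F]_m) x :
  row_free (\matrix_i a i) -> exists t : 'I_m -> F, x = \sum_i t i *: a i.
Proof.
set M := \matrix_i a i; rewrite row_free_unit => Munit.
exists (fun i => (x *m invmx M) 0 i); rewrite -{1}(mulmxKV Munit x) mulmx_sum_row.
by apply: eq_bigr => i _; rewrite rowK.
Qed.

Lemma hyperplane_sum_diff (I : finType) (i0 : I) (b : I -> 'rV[F]_m) (t : I -> F) c :
  (forall i, dotv (b i) c = 1) -> dotv (\sum_i t i *: b i) c = 0 ->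
  \sum_i t i *: b i = \sum_i t i *: (b i - b i0).
Proof.
move=> b1; rewrite dotv_sum => sum_t0.
under [RHS]eq_bigr => i _ do rewrite scalerBr.
rewrite sumrB -scaler_suml.
suff -> : \sum_i t i = 0 by rewrite scale0r subr0.
by rewrite -[RHS]sum_t0; apply: eq_bigr => i _; rewrite dotvZ b1 mulr1.
Qed.

End Hyperplane.

Theorem lemma2 (F : closedFieldType) (n : nat)
  (a : 'I_n.+1 -> 'rV[F]_n.+1) (c : 'rV[F]_n.+1) :
  (2 <= n)%N ->
  row_free (\matrix_(i < n.+1) a i) ->
  c != 0 ->
  (forall i, dotv (a i) c != 0) ->
  forall A : 'M[F]_n.+1,
    (forall (i j : 'I_n.+1) (x : 'rV[F]_n.+1),
        (i < j)%N -> on_line (a i) (a j) x -> dotv x c = 0 -> qform A x = 0) ->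
    forall x : 'rV[F]_n.+1, dotv x c = 0 -> qform A x = 0.
Proof.
move=> _ a_free _ ac_neq0 A qlines x xc0.
pose b i := (dotv (a i) c)^-1 *: a i.
have bc1 (i : 'I_n.+1) : dotv (b i) c = 1 by rewrite dotvZ mulVf.
have qb_lt (i j : 'I_n.+1) : (i < j)%N -> qform A (b i - b j) = 0.
  move=> ltij; apply: (qlines i j) => //; last by rewrite dotvB !bc1 subrr.
  by exists (dotv (a i) c)^-1, (- (dotv (a j) c)^-1); rewrite scaleNr.
have qb (i j : 'I_n.+1) : qform A (b i - b j) = 0.
  case: (ltngtP i j) => [/qb_lt //|/qb_lt|/val_inj ->]; last first.
    by rewrite subrr qform0.
  by rewrite -opprB qformN.
have [t xE] := row_free_span x a_free.
have xbE : x = \sum_i (t i * dotv (a i) c) *: b i.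
  by rewrite xE; apply: eq_bigr => i _; rewrite scalerA -mulrA mulfV ?mulr1.
rewrite xbE (hyperplane_sum_diff ord0 bc1); last by rewrite -xbE.
apply: qform_sum_isotropic => [i|i j]; first exact: qb.
by rewrite opprB addrA subrK; exact: qb.
Qed.
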